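(* Fix $k\in\mathbb{Z}_{\geq 1}$ and $m\geq k$. The map $W_k$, from $\mathrm{Av}_m(312)$ to the set of walks of size $m-k+1$ in the overlap graph $\mathcal{O}v(k,\mathrm{Av}(312))$, is surjective.
   Context: For $n\ge1$, $\mathcal S_n$ is the set of permutations of $[n]$; by convention $\mathrm{Av}_0(B)$ consists of the empty permutation. For $I=\{i_1<\dots<i_m\}$, $\mathrm{pat}_I(\sigma)$ is the unique permutation whose entries are in the same relative order as $\sigma(i_1),\dots,\sigma(i_m)$. $\sigma$ avoids $\pi$ if no $I$ has $\mathrm{pat}_I(\sigma)=\pi$; $\mathrm{Av}_n(B)$ is the set of size-$n$ permutations avoiding all elements of $B$. Overlap graph: $\mathcal{O}v(k,\mathrm{Av}(B))$ is the directed multigraph with vertex set $\mathrm{Av}_{k-1}(B)$ and, for each $\pi\in\mathrm{Av}_k(B)$, one edge labelled $\pi$ from $\mathrm{pat}_{\{1,\dots,k-1\}}(\pi)$ to $\mathrm{pat}_{\{2,\dots,k\}}(\pi)$. A walk of size $s$ is a sequence of $s$ edges $(e_1,\dots,e_s)$ with the arrival vertex of $e_i$ equal to the start vertex of $e_{i+1}$. For $\sigma\in\mathrm{Av}_m(B)$ with $m\ge k$, $W_k(\sigma)=(e_1,\dots,e_{m-k+1})$ where $e_i$ is the edge labelled $\mathrm{pat}_{\{i,i+1,\dots,i+k-1\}}(\sigma)$; this is a walk in $\mathcal{O}v(k,\mathrm{Av}(B))$. *)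

From mathcomp Require Import all_boot.
Set Implicit Arguments. Unset Strict Implicit. Unset Printing Implicit Defensive.

(* Permutations of [n] are represented (0-based) as sequences of nat that are
   rearrangements of [:: 0; 1; ...; n-1]; sigma(i+1) is the i-th entry. *)
Definition is_perm (n : nat) (s : seq nat) : Prop := perm_eq s (iota 0 n).

(* Standardisation: replace each entry by its rank (0-based) among the entries.
   For a sequence of distinct naturals this is the unique permutation whose
   entries are in the same relative order. *)
Definition std (s : seq nat) : seq nat :=
  [seq count (fun y => y < x) s | x <- s].

Definition pat (I : bitseq) (s : seq nat) : seq nat := std (mask I s).

Definition contains (s pi : seq nat) : Prop :=
  exists I : bitseq, size I = size s /\ pat I s = pi.

Definition avoids (s pi : seq nat) : Prop := ~ contains s pi.

Definition Av (B : seq (seq nat)) (n : nat) (s : seq nat) : Prop :=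
  is_perm n s /\ forall pi, pi \in B -> avoids s pi.

Definition p312 : seq nat := [:: 2; 0; 1].

(* Overlap graph Ov(k, Av(B)): vertices Av_{k-1}(B); one edge per pi in Av_k(B),
   labelled pi, from pat_{1..k-1}(pi) to pat_{2..k}(pi).  Edges are identified
   with their labels. *)
Definition ov_edge (B : seq (seq nat)) (k : nat) (pi : seq nat) : Prop := Av B k pi.
Definition ov_src (k : nat) (pi : seq nat) : seq nat := std (take k.-1 pi).
Definition ov_tgt (k : nat) (pi : seq nat) : seq nat := std (drop 1 pi).

Definition is_walk (B : seq (seq nat)) (k s : nat) (w : seq (seq nat)) : Prop :=
  size w = s /\
  (forall i, i < s -> ov_edge B k (nth [::] w i)) /\
  (forall i, i.+1 < s -> ov_tgt k (nth [::] w i) = ov_src k (nth [::] w i.+1)).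

Definition Wk (k : nat) (sigma : seq nat) : seq (seq nat) :=
  [seq std (take k (drop i sigma)) | i <- iota 0 (size sigma - k + 1)].

From mathcomp Require Import all_boot zify.
Set Implicit Arguments. Unset Strict Implicit.

(* Writing k+1 for the edge length, a walk of size s+1 is lifted to a
   312-avoiding permutation of size s+1+k one edge at a time.  Suppose sigma
   realises all but the last edge e.  The overlap condition says that the last
   k entries of sigma are ordered like the first k entries of e.  We append a
   new last entry v to sigma, bumping every entry >= v by one ([extend]),
   where v is the least value of sigma at a window position p with e_p > e_k,
   or the size of sigma if there is none ([insert_value]).  Then v splits the
   window as e_k splits e, so the new last window has pattern e while the
   earlier windows are unchanged; and a 312 ending at v would produce a 312
   either in sigma or in e. *)

Lemma size_std s : size (std s) = size s.
Proof. by rewrite size_map. Qed.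

Lemma nth_std s i : i < size s -> nth 0 (std s) i = count (fun y => y < nth 0 s i) s.
Proof. by move=> hi; rewrite (nth_map 0). Qed.

Lemma count_lt_mem x y s : x < y -> x \in s ->
  count (fun z => z < x) s < count (fun z => z < y) s.
Proof.
elim: s => //= z s IH hxy; rewrite inE => /orP [/eqP <-|hx].
  rewrite ltnn hxy add0n add1n ltnS; apply: sub_count => t /= ht.
  exact: ltn_trans ht hxy.
have := IH hxy hx.
case hzx: (z < x); first by rewrite (ltn_trans hzx hxy) /=; lia.
by case: (z < y) => /=; lia.
Qed.

Lemma std_lt s i j : i < size s -> j < size s ->
  (nth 0 (std s) i < nth 0 (std s) j) = (nth 0 s i < nth 0 s j).
Proof.
move=> hi hj; rewrite !nth_std //.
case: (ltnP (nth 0 s i) (nth 0 s j)) => h.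
  by apply: count_lt_mem h _; apply: mem_nth.
apply/negbTE; rewrite -leqNgt; apply: sub_count => z /= hz.
exact: leq_trans hz h.
Qed.

Lemma std_rel s t : size s = size t ->
  (forall i j, i < size s -> j < size s ->
     (nth 0 s i < nth 0 s j) = (nth 0 t i < nth 0 t j)) -> std s = std t.
Proof.
move=> hs hr; apply: (@eq_from_nth _ 0); first by rewrite !size_std.
move=> i; rewrite size_std => hi.
have count_nth (p : pred nat) u :
    count p u = count (fun j => p (nth 0 u j)) (iota 0 (size u)).
  by rewrite -{1}(mkseq_nth 0 u) /mkseq count_map.
rewrite !nth_std -?hs // (count_nth _ s) (count_nth _ t) -hs.
apply: eq_in_count => j; rewrite mem_iota add0n => /andP[_ hj] /=.
exact: hr.
Qed.

Lemma is_permP n s : is_perm n s <-> [/\ uniq s, size s = n & all (fun x => x < n) s].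
Proof.
split.
  move=> h; split.
  - by rewrite (perm_uniq h) iota_uniq.
  - by rewrite (perm_size h) size_iota.
  - by apply/allP => x; rewrite (perm_mem h) mem_iota.
move=> [hu hs ha]; apply: uniq_perm => //; first exact: iota_uniq.
have hsub : {subset s <= iota 0 n}.
  by move=> x hx; rewrite mem_iota /=; move/allP: ha => /(_ x hx).
have hsz : size (iota 0 n) <= size s by rewrite size_iota hs.
by have [_ h] := uniq_min_size hu hsub hsz.
Qed.

(* Permutations are fixed by standardisation: the rank of x is x itself. *)
Lemma std_perm n s : is_perm n s -> std s = s.
Proof.
move=> h; have [hu hs ha] := (is_permP n s).1 h.
have count_iota_lt x m : count (fun y => y < x) (iota 0 m) = minn x m.
  elim: m => [|m IH]; first by rewrite /= minn0.
  by rewrite -addn1 iotaD count_cat IH /= add0n; case: (ltnP m x) => /=; lia.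
apply: (@eq_from_nth _ 0); first by rewrite size_std.
move=> i; rewrite size_std => hi; rewrite nth_std // (permP h) count_iota_lt.
have : nth 0 s i < n by move/allP: ha; apply; apply: mem_nth.
lia.
Qed.

Definition has312 (s : seq nat) : Prop := exists i j l, i < j /\ j < l /\ l < size s /\
  nth 0 s j < nth 0 s l /\ nth 0 s l < nth 0 s i.

Lemma std3_312 a b c : (std [:: a; b; c] == p312) = (b < c < a).
Proof.
rewrite /std /=.
by case: (ltngtP a b) => h1; case: (ltngtP b c) => h2; case: (ltngtP a c) => h3 //=;
  rewrite ?ltnn /=; try lia.
Qed.

Lemma mask1_nth s I a : mask I s = [:: a] -> exists i, i < size s /\ nth 0 s i = a.
Proof.
elim: s I => [|x s IH] [|[] I] //=; first by case=> -> _; exists 0.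
by move=> /IH [i [h1 h2]]; exists i.+1.
Qed.

Lemma mask2_nth s I a b : mask I s = [:: a; b] ->
  exists i j, i < j /\ j < size s /\ nth 0 s i = a /\ nth 0 s j = b.
Proof.
elim: s I => [|x s IH] [|[] I] //=.
  by case=> -> /mask1_nth [j [h1 h2]]; exists 0, j.+1.
by move=> /IH [i [j [h1 [h2 [h3 h4]]]]]; exists i.+1, j.+1.
Qed.

Lemma mask3_nth s I a b c : mask I s = [:: a; b; c] ->
  exists i j l, i < j /\ j < l /\ l < size s /\
    nth 0 s i = a /\ nth 0 s j = b /\ nth 0 s l = c.
Proof.
elim: s I => [|x s IH] [|[] I] //=.
  by case=> -> /mask2_nth [j [l [h1 [h2 [h3 h4]]]]]; exists 0, j.+1, l.+1.
by move=> /IH [i [j [l [h1 [h2 [h3 [h4 [h5 h6]]]]]]]]; exists i.+1, j.+1, l.+1.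
Qed.

Lemma nth_mask1 s i : i < size s ->
  exists I, size I = size s /\ mask I s = [:: nth 0 s i].
Proof.
elim: s i => [|x s IH] [|i] //= hi.
  by exists (true :: nseq (size s) false); rewrite /= size_nseq mask_false.
by have [I [h1 h2]] := IH i hi; exists (false :: I); rewrite /= h1 h2.
Qed.

Lemma nth_mask2 s i j : i < j -> j < size s ->
  exists I, size I = size s /\ mask I s = [:: nth 0 s i; nth 0 s j].
Proof.
elim: s i j => [|x s IH] [|i] [|j] //= hij hj.
  by have [I [h1 h2]] := nth_mask1 hj; exists (true :: I); rewrite /= h1 h2.
by have [I [h1 h2]] := IH i j hij hj; exists (false :: I); rewrite /= h1 h2.
Qed.

Lemma nth_mask3 s i j l : i < j -> j < l -> l < size s ->
  exists I, size I = size s /\ mask I s = [:: nth 0 s i; nth 0 s j; nth 0 s l].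
Proof.
elim: s i j l => [|x s IH] [|i] [|j] [|l] //= hij hjl hl.
  by have [I [h1 h2]] := nth_mask2 (hjl : j < l) (hl : l < size s);
    exists (true :: I); rewrite /= h1 h2.
by have [I [h1 h2]] := IH i j l hij hjl hl; exists (false :: I); rewrite /= h1 h2.
Qed.

Lemma contains312 s : contains s p312 <-> has312 s.
Proof.
split.
  move=> [I [_ hp]]; rewrite /pat in hp.
  have hsz : size (mask I s) = 3 by rewrite -(size_std (mask I s)) hp.
  move: hp hsz; case hm: (mask I s) => [|a [|b [|c [|d r]]]] //= hp _.
  have /andP [h1 h2] : b < c < a by rewrite -std3_312 hp.
  have [i [j [l [? [? [? [ha [hb hc]]]]]]]] := mask3_nth hm.
  by exists i, j, l; rewrite ha hb hc; lia.
move=> [i [j [l [hij [hjl [hl [h1 h2]]]]]]].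
have [I [hI hm]] := nth_mask3 hij hjl hl.
by exists I; split => //; rewrite /pat hm; apply/eqP; rewrite std3_312 h1 h2.
Qed.

Lemma Av312 n s : Av [:: p312] n s <-> is_perm n s /\ ~ has312 s.
Proof.
split.
  by move=> [hp ha]; split => // h; apply: (ha p312); [rewrite inE | apply/contains312].
by move=> [hp hn]; split => // pi; rewrite inE => /eqP -> /contains312.
Qed.

(* Appending a new last value v to a permutation: entries >= v are bumped up
   by one (fintype's [bump]) so that the result is again a permutation. *)
Definition extend (v : nat) (s : seq nat) : seq nat := rcons (map (bump v) s) v.

Lemma ltn_bump2 v a b : (bump v a < bump v b) = (a < b).
Proof. by rewrite !ltnNge leq_bump2. Qed.

Lemma bump_ltv v z : (bump v z < v) = (z < v).
Proof. by rewrite /bump; case: (leqP v z) => h /=; lia. Qed.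

Lemma ltv_bump v z : (v < bump v z) = (v <= z).
Proof. by rewrite /bump; case: (leqP v z) => h /=; lia. Qed.

(* Bumping does not change the relative order, hence the standardisation. *)
Lemma std_map_bump v s : std (map (bump v) s) = std s.
Proof.
apply: std_rel; rewrite size_map // => i j hi hj.
by rewrite !(nth_map 0) // ltn_bump2.
Qed.

Lemma size_extend v s : size (extend v s) = (size s).+1.
Proof. by rewrite size_rcons size_map. Qed.

Lemma nth_extend v s t : t < size s -> nth 0 (extend v s) t = bump v (nth 0 s t).
Proof. by move=> ht; rewrite nth_rcons size_map ht (nth_map 0). Qed.

Lemma nth_extend_last v s : nth 0 (extend v s) (size s) = v.
Proof. by rewrite nth_rcons size_map ltnn eqxx. Qed.

Lemma extend_perm n v s : is_perm n s -> v <= n -> is_perm n.+1 (extend v s).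
Proof.
move=> /is_permP [hu hs ha] hvn; apply/is_permP; split.
- rewrite rcons_uniq (map_inj_uniq (can_inj (bumpK v))) hu andbT.
  by apply/mapP => [[z _ hz]]; move: (neq_bump v z); rewrite -hz eqxx.
- by rewrite size_extend hs.
- rewrite all_rcons ltnS hvn all_map; apply/allP => z hz /=.
  have : z < n by move/allP: ha; apply.
  by rewrite /bump; case: (leqP v z) => /=; lia.
Qed.

Lemma extend_has312 v s : has312 (extend v s) ->
  has312 s \/ exists i j, [/\ i < j, j < size s, nth 0 s j < v & v <= nth 0 s i].
Proof.
move=> [i [j [l [hij [hjl [hl [h1 h2]]]]]]]; rewrite size_extend ltnS in hl.
case: (ltngtP l (size s)) => hls; [left | lia | right].
- exists i, j, l; move: h1 h2.
  by rewrite !nth_extend ?ltn_bump2; try lia.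
- exists i, j; move: h1 h2.
  rewrite hls nth_extend_last !nth_extend ?bump_ltv ?ltv_bump; try lia.
  by move=> h1 h2; split; lia.
Qed.

Lemma extend_window v s i k : i + k <= size s ->
  std (take k (drop i (extend v s))) = std (take k (drop i s)).
Proof.
move=> hik; rewrite drop_rcons ?size_map; last lia.
by rewrite -cats1 takel_cat ?size_drop ?size_map; [rewrite -map_drop -map_take std_map_bump | lia].
Qed.

Lemma extend_last_window v s k (e : seq nat) : k <= size s -> is_perm k.+1 e ->
  (forall i j, i < k -> j < k -> (nth 0 s (size s - k + i) < nth 0 s (size s - k + j)) =
     (nth 0 e i < nth 0 e j)) ->
  (forall i, i < k -> (nth 0 s (size s - k + i) < v) = (nth 0 e i < nth 0 e k)) ->
  std (drop (size s - k) (extend v s)) = e.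
Proof.
move=> hk he hrel hsplit.
have [hue hse _] := (is_permP _ _).1 he.
have hdrop : drop (size s - k) (extend v s) = rcons (map (bump v) (drop (size s - k) s)) v.
  by rewrite drop_rcons ?size_map -?map_drop //; lia.
have hsz : size (drop (size s - k) s) = k by rewrite size_drop; lia.
have he_neq j : j < k -> nth 0 e j != nth 0 e k.
  by move=> hj; rewrite nth_uniq ?hse //; lia.
rewrite hdrop -(std_perm he); apply: std_rel; first by rewrite size_rcons size_map hsz hse.
rewrite size_rcons size_map hsz => i j hi hj.
rewrite !nth_rcons size_map hsz.
case: (ltngtP i k) => hik; try lia; case: (ltngtP j k) => hjk; try lia.
- by rewrite !(nth_map 0) ?hsz // ltn_bump2 !nth_drop hrel.
- by rewrite hjk (nth_map 0) ?hsz // bump_ltv nth_drop hsplit.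
- rewrite hik (nth_map 0) ?hsz // ltv_bump nth_drop leqNgt hsplit //.
  by case: (ltngtP (nth 0 e j) (nth 0 e k)) => //= h; move: (he_neq j hjk); rewrite h eqxx.
- by rewrite hik hjk !ltnn.
Qed.

Lemma foldr_minn_le n l x : x \in l -> foldr minn n l <= x.
Proof.
elim: l => //= y l IH; rewrite inE => /orP [/eqP ->|h]; first exact: geq_minl.
exact: leq_trans (geq_minr _ _) (IH h).
Qed.

Lemma foldr_minn_cases n l : foldr minn n l = n \/ foldr minn n l \in l.
Proof.
elim: l => [|y l IH]; first by left.
change (minn y (foldr minn n l) = n \/ minn y (foldr minn n l) \in y :: l).
case: (leqP y (foldr minn n l)) => _; first by right; rewrite inE eqxx.
by case: IH => [->|h2]; [left | right; rewrite inE h2 orbT].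
Qed.

Lemma foldr_minn_gt n l z : z < n -> all (fun y => z < y) l -> z < foldr minn n l.
Proof. by elim: l => //= y l IH hz /andP [h1 h2]; rewrite leq_min h1 IH. Qed.

(* The value to insert after sigma (of size s+k) so that the new last window of
   length k+1 realises e: the least sigma-value at a window position p whose
   e-counterpart exceeds e_k, or s+k if there is none. *)
Section InsertionValue.
Variables (s k : nat) (sg e : seq nat).
Hypothesis sg_av : Av [:: p312] (s + k) sg.
Hypothesis e_av : Av [:: p312] k.+1 e.
Hypothesis window_rel : forall i j, i < k -> j < k ->
  (nth 0 sg (s + i) < nth 0 sg (s + j)) = (nth 0 e i < nth 0 e j).

Definition insert_value : nat :=
  foldr minn (s + k) [seq nth 0 sg (s + p) | p <- iota 0 k & nth 0 e k < nth 0 e p].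

Lemma sg_entry_lt t : t < s + k -> nth 0 sg t < s + k.
Proof.
have [hp _] := (Av312 _ _).1 sg_av; have [_ hs ha] := (is_permP _ _).1 hp.
by move=> ht; move/allP: ha; apply; apply: mem_nth; rewrite hs.
Qed.

Lemma insert_value_cases : insert_value = s + k \/
  exists p, [/\ p < k, nth 0 e k < nth 0 e p & insert_value = nth 0 sg (s + p)].
Proof.
case: (foldr_minn_cases (s + k)
  [seq nth 0 sg (s + p) | p <- iota 0 k & nth 0 e k < nth 0 e p]) => h; [by left | right].
move: h => /mapP [p]; rewrite mem_filter mem_iota => /andP [hq hp] hv.
by exists p; split => //; lia.
Qed.

Lemma insert_value_le : insert_value <= s + k.
Proof.
by case: insert_value_cases => [->|[p [hp _ ->]]] //; apply: ltnW; apply: sg_entry_lt; lia.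
Qed.

Lemma insert_value_split i : i < k ->
  (nth 0 sg (s + i) < insert_value) = (nth 0 e i < nth 0 e k).
Proof.
move=> hi; have [hp _] := (Av312 _ _).1 e_av; have [hue hse _] := (is_permP _ _).1 hp.
case: (ltngtP (nth 0 e i) (nth 0 e k)) => h.
- apply: foldr_minn_gt; first by apply: sg_entry_lt; lia.
  apply/allP => y /mapP [j]; rewrite mem_filter mem_iota => /andP [hqj hj] ->.
  by rewrite window_rel ?(ltn_trans h hqj) //; lia.
- apply/negbTE; rewrite -leqNgt; apply: foldr_minn_le.
  by apply: map_f; rewrite mem_filter h mem_iota /=.
- by move/eqP: h; rewrite nth_uniq ?hse //; lia.
Qed.

(* No entry >= v of sigma is followed by an entry < v: this is what keeps the
   extension 312-avoiding.  Such a pair would give a 312 in sigma ending at the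
   position of v, or a 312 in e ending at e_k. *)
Lemma insert_value_no_cross i j : i < j -> j < s + k ->
  nth 0 sg j < insert_value -> insert_value <= nth 0 sg i -> False.
Proof.
move=> hij hj h1 h2.
have [hp hn] := (Av312 _ _).1 sg_av; have [hu hs _] := (is_permP _ _).1 hp.
have [hpe hne] := (Av312 _ _).1 e_av; have [_ hse _] := (is_permP _ _).1 hpe.
case: insert_value_cases => [hv|[p [hpk hqp hv]]].
  by have := sg_entry_lt (t := i); rewrite hv in h2; lia.
case: (ltngtP j (s + p)) => hjp.
- apply: hn; exists i, j, (s + p); rewrite -hv; do 3 (split; first lia); split => //.
  rewrite ltn_neqAle h2 andbT hv nth_uniq ?hs //; lia.
- apply: hne; exists p, (j - s), k; do 3 (split; first lia).
  by rewrite -insert_value_split ?subnKC //; lia.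
- by rewrite hjp -hv ltnn in h1.
Qed.

End InsertionValue.

Lemma extend_step s k sg e : Av [:: p312] (s + k) sg -> Av [:: p312] k.+1 e ->
  (forall i j, i < k -> j < k ->
     (nth 0 sg (s + i) < nth 0 sg (s + j)) = (nth 0 e i < nth 0 e j)) ->
  let sg2 := extend (insert_value s k sg e) sg in
  Av [:: p312] (s + k).+1 sg2 /\ std (drop s sg2) = e.
Proof.
move=> hsg he hrel sg2.
have [hp hn] := (Av312 _ _).1 hsg; have [_ hs _] := (is_permP _ _).1 hp.
have [hpe _] := (Av312 _ _).1 he.
have hsk : size sg - k = s by rewrite hs addnK.
split.
- apply/Av312; split; first exact/extend_perm/insert_value_le.
  case/extend_has312 => [/hn //|[i [j [hij hj h1 h2]]]].
  by apply: (insert_value_no_cross hsg he hrel hij _ h1 h2); rewrite -hs.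
- rewrite -hsk; apply: extend_last_window; rewrite ?hsk -?hs //; first by lia.
  exact: insert_value_split.
Qed.

Lemma size_Wk k sg : size (Wk k sg) = size sg - k + 1.
Proof. by rewrite /Wk size_map size_iota. Qed.

Lemma nth_Wk k sg i : i < size sg - k + 1 ->
  nth [::] (Wk k sg) i = std (take k (drop i sg)).
Proof. by move=> h; rewrite /Wk (nth_map 0) ?size_iota // nth_iota. Qed.

Lemma Wk_extend v sg k : k < size sg ->
  Wk k.+1 (extend v sg) = rcons (Wk k.+1 sg) (std (drop (size sg - k) (extend v sg))).
Proof.
move=> hk; rewrite /Wk size_extend subSS -cats1.
have -> : size sg - k.+1 + 1 = size sg - k by lia.
rewrite iotaD map_cat /= add0n take_oversize ?size_drop ?size_extend; last by lia.
congr (_ ++ _); apply/eq_in_map => i; rewrite mem_iota => /andP [_ hi].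
by apply: extend_window; lia.
Qed.

Lemma is_walk_take B k n w : is_walk B k n.+1 w -> is_walk B k n (take n w).
Proof.
move=> [hw [hedge hadj]]; split; first by rewrite size_take hw ltnSn.
split => i hi; rewrite !nth_take //; [apply: hedge | apply: hadj | ]; lia.
Qed.

Lemma overlap_rel k t e : size t = k.+1 -> size e = k.+1 ->
  ov_tgt k.+1 (std t) = ov_src k.+1 e ->
  forall i j, i < k -> j < k -> (nth 0 t i.+1 < nth 0 t j.+1) = (nth 0 e i < nth 0 e j).
Proof.
rewrite /ov_tgt /ov_src /= => ht he hov i j hi hj.
have hd : size (drop 1 (std t)) = k by rewrite size_drop size_std ht subn1.
rewrite -std_lt ?ht // -!(nth_drop 1 0 (std t)) -std_lt ?hd // hov.
by rewrite std_lt ?size_take ?he ?ltnSn // !nth_take.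
Qed.

Lemma walk_lift k s w : is_walk [:: p312] k.+1 s.+1 w ->
  exists sg, Av [:: p312] (s.+1 + k) sg /\ Wk k.+1 sg = w.
Proof.
elim: s w => [|s IH] w hw; have [hsz [hedge hadj]] := hw.
  have [hpe _] := hedge 0 isT; have [_ hse _] := (is_permP _ _).1 hpe.
  exists (nth [::] w 0); split; first by rewrite add1n; exact: hedge.
  apply: (@eq_from_nth _ [::]); rewrite size_Wk hse ?subnn ?hsz // => i.
  rewrite ltnS leqn0 => /eqP ->.
  by rewrite nth_Wk ?hse ?subnn // drop0 take_oversize ?hse // (std_perm hpe).
have [sg [hsg hWk]] := IH _ (is_walk_take hw).
set e := nth [::] w s.+1.
have he : Av [:: p312] k.+1 e by apply: hedge.
have [[hp _] [hpe _]] := (hsg, he); have [_ hs _] := (is_permP _ _).1 hp.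
have [_ hse _] := (is_permP _ _).1 hpe.
set t := take k.+1 (drop s sg).
have ht : size t = k.+1 by rewrite size_take size_drop hs; case: ltnP; lia.
have hlast : nth [::] w s = std t.
  by rewrite -(nth_take [::] (ltnSn s)) -hWk nth_Wk // hs; lia.
have hrel i j : i < k -> j < k ->
    (nth 0 sg (s.+1 + i) < nth 0 sg (s.+1 + j)) = (nth 0 e i < nth 0 e j).
  move=> hi hj; rewrite -(overlap_rel ht hse _ hi hj) -?hlast; last exact: hadj.
  by rewrite !nth_take ?nth_drop ?addnS.
have [hsg2 hwin] := extend_step hsg he hrel.
exists (extend (insert_value s.+1 k sg e) sg); split; first by rewrite addSn.
rewrite Wk_extend; last by rewrite hs; lia.
by rewrite hs addnK hwin hWk -take_nth ?hsz // take_oversize ?hsz.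
Qed.

Theorem mainTheorem4 (k m : nat) :
  1 <= k -> k <= m ->
  forall w : seq (seq nat), is_walk [:: p312] k (m - k + 1) w ->
  exists sigma : seq nat, Av [:: p312] m sigma /\ Wk k sigma = w.
Proof.
case: k => [|k] // _ hkm w; rewrite addn1 => /walk_lift [sg [hsg hW]].
have -> : m = (m - k.+1).+1 + k by lia.
by exists sg.
Qed.
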